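(* Let $0<i_1<i_2<\cdots<i_L$ be integers and let $\mathcal S=\{x_0,x_{i_1},\ldots,x_{i_L}\}$, with associated restricted right-arm rotation distance $d_{RRA}^{\mathcal S}$ (rotations allowed only at the nodes at levels $0,i_1,\ldots,i_L$ on the right arm). Let $T_1,T_2$ be finite rooted binary trees with the same number of nodes such that $(T_1,T_2)$ is a reduced tree pair diagram, and let the word associated to $(T_1,T_2)$ (its unique normal form) be $x_{a_1}^{r_1}\cdots x_{a_k}^{r_k}x_{b_l}^{-s_l}\cdots x_{b_1}^{-s_1}$. If some $x_t^{\pm1}$ with $1\le t\le i_1-1$ appears in this normal form, then $d_{RRA}^{\mathcal S}(T_1,T_2)$ is not defined. Conversely, if no $x_t^{\pm1}$ with $1\le t\le i_1-1$ appears in this normal form, then $d_{RRA}^{\mathcal S}(T_1,T_2)$ is defined.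
   Context: Trees: all trees are finite rooted binary trees in which each internal vertex (node) has a left and a right child; childless vertices are leaves. A tree with $n$ nodes has $n+1$ leaves, numbered $0,1,\ldots,n$ from left to right. The right arm (right side) of a tree consists of the root together with all nodes reachable from the root by a path consisting only of right edges. The level of a node is the number of edges on the path from it to the root. An exposed caret is a node both of whose children are leaves; its leaves $i,i+1$ form a sibling pair. Rotations: if $N$ is a node whose left child $M$ is a node, with $A,B$ the left and right subtrees of $M$ and $C$ the right subtree of $N$, right rotation at $N$ replaces the subtree at $N$ by a tree whose root has left subtree $A$ and whose right child is a node with left subtree $B$ and right subtree $C$; left rotation at $N$ is the inverse operation (possible only when the right child of $N$ is a node). Rotations preserve the number of nodes. Thompson's group $F=\langle x_0,x_1,\ldots\mid x_i^{-1}x_nx_i=x_{n+1}\ (i<n)\rangle$; its elements have normal forms $x_{a_1}^{r_1}\cdots x_{a_k}^{r_k}x_{b_l}^{-s_l}\cdots x_{b_1}^{-s_1}$ ($r_i,s_i>0$, $a_1<\cdots<a_k$, $b_1<\cdots<b_l$), unique if whenever both $x_i$ and $x_i^{-1}$ occur so does $x_{i+1}^{\pm1}$. Tree pair diagrams: a pair $(T_1,T_2)$ of trees with the same number $n$ of nodes. The leaf exponent of leaf $k$ in a tree is the length of the longest path of left edges going upward from leaf $k$ none of whose vertices lies on the right arm. The word associated to $(T_1,T_2)$ is $x_0^{f_0}x_1^{f_1}\cdots x_n^{f_n}x_n^{-e_n}\cdots x_1^{-e_1}x_0^{-e_0}$, where $e_i$ (resp. $f_i$) is the leaf exponent of leaf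 $i$ in $T_1$ (resp. $T_2$); $(T_1,T_2)$ represents the element of $F$ given by this word. The diagram is reduced if there is no $i$ such that leaves $i,i+1$ form a sibling pair in both $T_1$ and $T_2$; for a reduced diagram the associated word is the unique normal form. Restricted right-arm rotation distance: for $\mathcal S=\{x_0,x_{i_1},\ldots,x_{i_L}\}$ and trees $T_1,T_2$ with the same number of nodes, $d_{RRA}^{\mathcal S}(T_1,T_2)$ is the minimal number of (left or right) rotations, each performed at a node on the right arm at one of the levels $0,i_1,\ldots,i_L$, needed to transform $T_1$ into $T_2$; it is said to be defined when some such sequence of rotations exists. *)

From Stdlib Require Import Relations.
From mathcomp Require Import all_boot.
Set Implicit Arguments. Unset Strict Implicit. Unset Printing Implicit Defensive.

Inductive tree : Type := Leaf | Node of tree & tree.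

Fixpoint nodes (t : tree) : nat :=
  match t with Leaf => 0 | Node l r => (nodes l + nodes r).+1 end.

Definition nleaves (t : tree) : nat := (nodes t).+1.

Definition rotR (t : tree) : option tree :=
  match t with Node (Node a b) c => Some (Node a (Node b c)) | _ => None end.
Definition rotL (t : tree) : option tree :=
  match t with Node a (Node b c) => Some (Node (Node a b) c) | _ => None end.

(* Apply a local operation at the node of the right arm at level k
   (the node reached from the root by k right edges); None if that vertex
   does not exist or is a leaf, or if the operation is impossible there. *)
Fixpoint at_arm (f : tree -> option tree) (k : nat) (t : tree) : option tree :=
  match k, t with
  | 0, Node _ _ => f t
  | k'.+1, Node l r =>
      match at_arm f k' r with Some r' => Some (Node l r') | None => None end
  | _, Leaf => None
  end.

Definition rra_step (levels : seq nat) (t t' : tree) : Prop :=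
  exists2 k, k \in levels &
    at_arm rotR k t = Some t' \/ at_arm rotL k t = Some t'.

(* d_RRA^S(T1,T2) is defined: some finite sequence of allowed rotations
   transforms T1 into T2; S = {x_0, x_{i_1}, ..., x_{i_L}} gives levels 0,i_1,..,i_L *)
Definition dRRA_defined (idx : seq nat) (T1 T2 : tree) : Prop :=
  clos_refl_trans tree (rra_step (0 :: idx)) T1 T2.

(* Leaf exponents.  For a subtree none of whose vertices lies on the right arm:
   the leftmost leaf of the left subtree gains one more left edge upward. *)
Definition incr_head (s : seq nat) : seq nat :=
  match s with [::] => [::] | x :: s' => x.+1 :: s' end.

Fixpoint exps_off (t : tree) : seq nat :=
  match t with Leaf => [:: 0] | Node l r => incr_head (exps_off l) ++ exps_off r end.

(* Whole tree: the root and right-arm nodes are on the right arm, so the edge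
   from a left subtree of an arm node into the arm is not counted. *)
Fixpoint leaf_exps (t : tree) : seq nat :=
  match t with Leaf => [:: 0] | Node l r => exps_off l ++ leaf_exps r end.

(* leaf exponent of leaf k (0 for out-of-range k) *)
Definition leaf_exp (t : tree) (k : nat) : nat := nth 0 (leaf_exps t) k.

(* indices i such that leaves i, i+1 form a sibling pair (exposed caret) *)
Fixpoint sibpairs (t : tree) : seq nat :=
  match t with
  | Leaf => [::]
  | Node Leaf Leaf => [:: 0]
  | Node l r => sibpairs l ++ map (addn (nleaves l)) (sibpairs r)
  end.

Definition reduced (T1 T2 : tree) : Prop :=
  nodes T1 = nodes T2 /\ ~ (exists i, i \in sibpairs T1 /\ i \in sibpairs T2).

(* The word associated to (T1,T2) is
     x_0^{f_0} ... x_n^{f_n} x_n^{-e_n} ... x_0^{-e_0},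
   e_i = leaf_exp T1 i, f_i = leaf_exp T2 i. *)
Definition appears_in_word (T1 T2 : tree) (t : nat) : Prop :=
  leaf_exp T2 t <> 0 \/ leaf_exp T1 t <> 0.

(* A leaf a has nonzero exponent exactly when some internal node off the right
   arm has a as its leftmost leaf.  When 0 < a < i_1, every allowed rotation
   acts either at the root or strictly to the right of leaf a, so such an
   off-arm subtree hanging at a survives unchanged; if d_RRA(T1,T2) were
   defined, T1 and T2 would share it, hence share a sibling pair, contradicting
   reducedness.  Conversely, if no leaf 0 < a < i_1 has nonzero exponent, the
   first internal node off the arm sits below an arm node of level 0 or at least
   i_1; a right rotation there (at level i_1 + d it is obtained by conjugating a
   level-(i_1 + d - 1) rotation with rotations at the root) moves one more node
   onto the arm, so both trees reduce to the right vine. *)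

From Stdlib Require Import Relations.
From mathcomp Require Import all_boot zify.

Set Implicit Arguments.
Unset Strict Implicit.
Unset Printing Implicit Defensive.

Lemma nleaves_Node l r : nleaves (Node l r) = nleaves l + nleaves r.
Proof. by rewrite /nleaves /=; lia. Qed.

Lemma nth0_neq0_size (s : seq nat) a : nth 0 s a <> 0 -> a < size s.
Proof. by move=> nz; rewrite ltnNge; apply/negP => /(nth_default 0). Qed.

Fixpoint occurs_at (S : tree) (a : nat) (t : tree) : Prop :=
  (a = 0 /\ t = S) \/
  match t with
  | Leaf => False
  | Node l r => occurs_at S a l \/ exists2 a', a = nleaves l + a' & occurs_at S a' r
  end.

(* [hangs_at S a T]: S occurs at leaf a of T inside the left subtree of a
   right-arm node, i.e. S contains no vertex of the right arm of T. *)
Fixpoint hangs_at (S : tree) (a : nat) (T : tree) : Prop :=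
  match T with
  | Leaf => False
  | Node l r => occurs_at S a l \/ exists2 a', a = nleaves l + a' & hangs_at S a' r
  end.

Lemma size_exps_off t : size (exps_off t) = nleaves t.
Proof.
elim: t => [//|l IHl r IHr] /=.
by rewrite size_cat IHr nleaves_Node -IHl; case: (exps_off l).
Qed.

Lemma exps_off_neq0P A a :
  nth 0 (exps_off A) a <> 0 <-> exists x y, occurs_at (Node x y) a A.
Proof.
have nth_incr_head s b : 0 < b -> nth 0 (incr_head s) b = nth 0 s b.
  by case: s => [|x s] //; case: b.
have size_incr_head s : size (incr_head s) = size s by case: s.
split.
- elim: A a => [[|[|a]] //|l IHl r IHr [|a]] /=; first by exists l, r; left.
  rewrite nth_cat size_incr_head size_exps_off; case: ifP => lt_al.
    rewrite nth_incr_head // => /IHl [x [y occ]].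
    by exists x, y; right; left.
  move=> /IHr [x [y occ]]; exists x, y; right; right.
  by exists (a.+1 - nleaves l) => //; move: lt_al => /negbT; lia.
- case=> x [y]; elim: A a => [|l IHl r IHr] a /=; first by case=> [[]|].
  have sz := size_exps_off l.
  case: a => [|a] occ.
    by rewrite nth_cat size_incr_head sz /=; case: (exps_off l) sz.
  case: occ => [[//]|[/IHl nz|[a' Ea /IHr]]].
  + by rewrite nth_cat size_incr_head (nth0_neq0_size nz) nth_incr_head.
  + by rewrite nth_cat size_incr_head sz Ea ltnNge leq_addr /= addKn.
Qed.

Lemma leaf_exp_neq0P T a :
  leaf_exp T a <> 0 <-> exists x y, hangs_at (Node x y) a T.
Proof.
rewrite /leaf_exp; split.
- elim: T a => [|l IHl r IHr] a /=; first by case: a => [|[|a]].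
  rewrite nth_cat size_exps_off; case: ifP => lt_al.
    by move=> /exps_off_neq0P [x [y occ]]; exists x, y; left.
  move=> /IHr [x [y hang]]; exists x, y; right.
  by exists (a - nleaves l) => //; move: lt_al => /negbT; lia.
- case=> x [y]; elim: T a => [//|l IHl r IHr] a /= [occ|[a' Ea /IHr]].
  + have nz : nth 0 (exps_off l) a <> 0 by apply/exps_off_neq0P; exists x, y.
    by rewrite nth_cat (nth0_neq0_size nz).
  + by rewrite nth_cat size_exps_off Ea ltnNge leq_addr /= addKn.
Qed.

Lemma at_arm_rotRK k t t' : at_arm rotR k t = Some t' -> at_arm rotL k t' = Some t.
Proof.
elim: k t t' => [|k IHk] [|l r] t' //=; first by case: l => [|a b] //= [<-].
by case E: (at_arm rotR k r) => [r'|] // [<-] /=; rewrite (IHk _ _ E).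
Qed.

Lemma at_arm_rotLK k t t' : at_arm rotL k t = Some t' -> at_arm rotR k t' = Some t.
Proof.
elim: k t t' => [|k IHk] [|l r] t' //=; first by case: r => [|a b] //= [<-].
by case E: (at_arm rotL k r) => [r'|] // [<-] /=; rewrite (IHk _ _ E).
Qed.

Lemma rra_step_sym levels t t' : rra_step levels t t' -> rra_step levels t' t.
Proof.
case=> k k_in [rot|rot]; exists k => //.
- by right; apply: at_arm_rotRK.
- by left; apply: at_arm_rotLK.
Qed.

Lemma dRRA_defined_sym idx T T' : dRRA_defined idx T T' -> dRRA_defined idx T' T.
Proof.
elim=> [x y /rra_step_sym step|x|x y z _ xy _ yz]; first exact: rt_step.
- exact: rt_refl.
- exact: rt_trans yz xy.
Qed.

Lemma hangs_at_arm_left f k S a T T' :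
  a < k -> at_arm f k T = Some T' -> hangs_at S a T -> hangs_at S a T'.
Proof.
elim: k a T T' => [//|k IHk] a [//|l r] T' /= lt_ak.
case E: (at_arm f k r) => [r'|] // [<-] /=.
case=> [occ_l|[a' Ea hang_r]]; first by left.
right; exists a' => //; apply: IHk hang_r => //.
by move: lt_ak; rewrite Ea /nleaves; lia.
Qed.

Lemma hangs_rotR_root S a T T' :
  0 < a -> rotR T = Some T' -> hangs_at S a T -> hangs_at S a T'.
Proof.
move=> a_gt0; case: T => [|[|x y] c] //= [<-] /=.
case=> [[[a0 _]|[occ_x|[a' Ea occ_y]]]|[a' Ea hang_c]].
- by rewrite a0 in a_gt0.
- by left.
- by right; exists a' => //; left.
- right; exists (nleaves y + a'); first by rewrite Ea nleaves_Node addnA.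
  by right; exists a'.
Qed.

Lemma hangs_rotL_root S a T T' : rotL T = Some T' -> hangs_at S a T -> hangs_at S a T'.
Proof.
case: T => [|x [|y c]] //= [<-] /=.
case=> [occ_x|[a' Ea [occ_y|[a'' Ea' hang_c]]]].
- by left; right; left.
- by left; right; right; exists a'.
- by right; exists a''; first by rewrite Ea Ea' nleaves_Node addnA.
Qed.

Lemma hangs_rra_step levels S a T T' :
  0 < a -> {in levels, forall k, (k == 0) || (a < k)} ->
  rra_step levels T T' -> hangs_at S a T -> hangs_at S a T'.
Proof.
move=> a_gt0 low [k /low /orP[/eqP-> | lt_ak] rot].
- case: T rot => [[]//|l r] [rot|rot].
  + exact: hangs_rotR_root rot.
  + exact: hangs_rotL_root rot.
- by case: rot => rot; apply: hangs_at_arm_left rot.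
Qed.

Lemma hangs_dRRA idx S a T T' :
  0 < a -> {in idx, forall k, a < k} ->
  dRRA_defined idx T T' -> hangs_at S a T -> hangs_at S a T'.
Proof.
move=> a_gt0 low; elim=> [x y step|//|x y z _ xy _ yz]; last by move/xy/yz.
apply: hangs_rra_step step => // k; rewrite inE => /orP[-> // | /low ->].
exact: orbT.
Qed.

Lemma sibpairs_Node l r : (l, r) <> (Leaf, Leaf) ->
  sibpairs (Node l r) = sibpairs l ++ map (addn (nleaves l)) (sibpairs r).
Proof. by case: l => [|? ?]; case: r. Qed.

Lemma sibpairs_left l r i : i \in sibpairs l -> i \in sibpairs (Node l r).
Proof. by case: l => [//|x y] si; rewrite sibpairs_Node // mem_cat si. Qed.

Lemma sibpairs_right l r i :
  i \in sibpairs r -> nleaves l + i \in sibpairs (Node l r).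
Proof.
by case: r => [//|x y] si; rewrite sibpairs_Node // mem_cat map_f ?orbT.
Qed.

Lemma sibpairs_Node_nonempty x y : exists i, i \in sibpairs (Node x y).
Proof.
suff [//|//] : Node x y = Leaf \/ exists i, i \in sibpairs (Node x y).
elim: (Node x y) => [|l [->|[i si]] r IHr]; first by left.
  case: IHr => [->|[j sj]]; right; first by exists 0.
  by exists (nleaves Leaf + j); apply: sibpairs_right.
by right; exists i; apply: sibpairs_left.
Qed.

Lemma occurs_at_sibpairs S a t i :
  occurs_at S a t -> i \in sibpairs S -> a + i \in sibpairs t.
Proof.
elim: t a => [|l IHl r IHr] a /=; first by case=> [[-> <-]|].
case=> [[-> <-] //|[occ_l|[a' -> occ_r]]] si.
- exact/sibpairs_left/IHl.
- by rewrite -addnA; apply/sibpairs_right/IHr.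
Qed.

Lemma hangs_at_sibpairs S a T i :
  hangs_at S a T -> i \in sibpairs S -> a + i \in sibpairs T.
Proof.
elim: T a => [//|l IHl r IHr] a /= [occ_l|[a' -> hang_r]] si.
- exact/sibpairs_left/(occurs_at_sibpairs occ_l).
- by rewrite -addnA; apply/sibpairs_right/IHr.
Qed.

Lemma hangs_at_not_reduced x y a T1 T2 :
  hangs_at (Node x y) a T1 -> hangs_at (Node x y) a T2 -> ~ reduced T1 T2.
Proof.
move=> hang1 hang2 [_ []]; have [i si] := sibpairs_Node_nonempty x y.
by exists (a + i); split; apply: hangs_at_sibpairs si.
Qed.

Lemma low_generator_dRRA_undefined idx T1 T2 a :
  reduced T1 T2 -> 0 < a -> {in idx, forall k, a < k} ->
  appears_in_word T1 T2 a -> ~ dRRA_defined idx T1 T2.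
Proof.
move=> red a_gt0 low app reach.
have [x [y [hang1 hang2]]] :
    exists x y, hangs_at (Node x y) a T1 /\ hangs_at (Node x y) a T2.
  case: app => /leaf_exp_neq0P [x [y hang]]; exists x, y.
  - by split=> //; apply: hangs_dRRA (dRRA_defined_sym reach) hang.
  - by split=> //; apply: hangs_dRRA reach hang.
exact: hangs_at_not_reduced hang1 hang2 red.
Qed.

Lemma dRRA_rotR_above idx i d t t' :
  0 < i -> i \in idx -> at_arm rotR (i + d) t = Some t' -> dRRA_defined idx t t'.
Proof.
move=> i_gt0 i_in; elim: d t t' => [|d IHd] t t'.
  rewrite addn0 => rot; apply: rt_step; exists i; last by left.
  by rewrite inE i_in orbT.
rewrite -(prednK i_gt0) addSn addnS; case: t => [//|a [//|b c]] /=.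
case E: (at_arm rotR (i.-1 + d) c) => [c'|] // [<-].
(* A left rotation at the root lifts the rest of the arm by one level. *)
apply: (@rt_trans _ _ _ (Node (Node a b) c)).
  by apply: rt_step; exists 0; [rewrite inE | right].
apply: (@rt_trans _ _ _ (Node (Node a b) c')).
  by apply: IHd; rewrite -(prednK i_gt0) addSn /= E.
by apply: rt_step; exists 0; [rewrite inE | left].
Qed.

Fixpoint vine_onto (k : nat) (u : tree) : tree :=
  if k is k'.+1 then Node Leaf (vine_onto k' u) else u.

Definition vine (n : nat) : tree := vine_onto n Leaf.

Fixpoint off_arm (T : tree) : nat :=
  if T is Node l r then nodes l + off_arm r else 0.

Lemma nodes_vine_onto k u : nodes (vine_onto k u) = k + nodes u.
Proof. by elim: k => //= k ->. Qed.

Lemma off_arm_vine_onto k u : off_arm (vine_onto k u) = off_arm u.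
Proof. by elim: k. Qed.

Lemma at_arm_vine_onto f k p q u :
  f (Node p q) = Some u -> at_arm f k (vine_onto k (Node p q)) = Some (vine_onto k u).
Proof. by move=> rot; elim: k => [|k IHk] //=; rewrite IHk. Qed.

Lemma hangs_at_vine_onto S c k : hangs_at S k (vine_onto k (Node S c)).
Proof. by elim: k => [|k IHk] /=; [left; case: S; left | right; exists k]. Qed.

Lemma off_arm0_vine T : off_arm T = 0 -> T = vine (nodes T).
Proof.
elim: T => [//|[|? ?] _ r IHr] //=; rewrite add0n => off_r.
by rewrite {1}(IHr off_r).
Qed.

Lemma first_off_arm_node T :
  0 < off_arm T -> exists k x y c, T = vine_onto k (Node (Node x y) c).
Proof.
elim: T => [//|[|x y] _ r IHr] /=; last by exists 0, x, y, r.
by move=> /IHr [k [x [y [c ->]]]]; exists k.+1, x, y, c.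
Qed.

Definition flat_below (i : nat) (T : tree) : Prop :=
  forall a, 0 < a < i -> leaf_exp T a = 0.

Section ReachVine.

Variables (i : nat) (idx : seq nat).
Hypotheses (i_gt0 : 0 < i) (i_in_idx : i \in idx) (idx_ge : {in idx, forall k, i <= k}).

Lemma flat_below_dRRA T T' : dRRA_defined idx T T' -> flat_below i T -> flat_below i T'.
Proof.
move=> reach flat a /andP[a_gt0 lt_ai].
have low : {in idx, forall k, a < k} by move=> k /idx_ge; apply: leq_trans.
case: (leaf_exp T' a =P 0) => // /leaf_exp_neq0P [x [y hang]].
have /leaf_exp_neq0P : exists x y, hangs_at (Node x y) a T.
  by exists x, y; apply: hangs_dRRA (dRRA_defined_sym reach) hang.
by rewrite flat ?a_gt0.
Qed.

Lemma dRRA_vine T : flat_below i T -> dRRA_defined idx T (vine (nodes T)).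
Proof.
have [m] := ubnP (off_arm T); elim: m T => // m IHm T lt_Tm flat.
have [/off_arm0_vine {1}-> | off_gt0] := posnP (off_arm T); first exact: rt_refl.
have [k [x [y [c ET]]]] := first_off_arm_node off_gt0.
set T' := vine_onto k (Node x (Node y c)).
have rot : at_arm rotR k T = Some T' by rewrite ET; apply: at_arm_vine_onto.
have reach : dRRA_defined idx T T'.
  have [k0 | k_gt0] := posnP k.
    by apply: rt_step; exists k; [rewrite k0 inE | left].
  have le_ik : i <= k.
    rewrite leqNgt; apply/negP => lt_ki.
    have /leaf_exp_neq0P : exists x' y', hangs_at (Node x' y') k T.
      by exists x, y; rewrite ET; apply: hangs_at_vine_onto.
    by rewrite flat ?k_gt0.
  by apply: (@dRRA_rotR_above _ i (k - i)); rewrite ?subnKC.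
have nodesT' : nodes T' = nodes T by rewrite ET !nodes_vine_onto /=; lia.
apply: (rt_trans _ _ _ _ _ reach); rewrite -nodesT'.
apply: IHm (flat_below_dRRA reach flat).
by move: lt_Tm; rewrite ET /T' !off_arm_vine_onto /=; lia.
Qed.

End ReachVine.

Lemma sorted_ltn_head_le i s : sorted ltn (i :: s) -> {in i :: s, forall k, i <= k}.
Proof.
move=> /(order_path_min ltn_trans)/allP lt_i k.
by rewrite inE => /orP[/eqP-> // | /lt_i /ltnW].
Qed.

Theorem lemma3p4 (i1 : nat) (rest : seq nat) (T1 T2 : tree) :
  0 < i1 -> sorted ltn (i1 :: rest) ->
  nodes T1 = nodes T2 -> reduced T1 T2 ->
  ((exists t, 1 <= t <= i1 - 1 /\ appears_in_word T1 T2 t) ->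
     ~ dRRA_defined (i1 :: rest) T1 T2) /\
  (~ (exists t, 1 <= t <= i1 - 1 /\ appears_in_word T1 T2 t) ->
     dRRA_defined (i1 :: rest) T1 T2).
Proof.
move=> i1_gt0 /sorted_ltn_head_le idx_ge same_nodes red.
have i1_in : i1 \in i1 :: rest by rewrite inE eqxx.
split=> [[t [t_low app]] | none].
  apply: low_generator_dRRA_undefined red _ _ app; first by lia.
  by move=> k /idx_ge; apply: leq_trans; lia.
have flat T : (forall t, leaf_exp T t <> 0 -> appears_in_word T1 T2 t) ->
    flat_below i1 T.
  move=> app t t_low; case: (leaf_exp T t =P 0) => // /app app_t.
  by case: none; exists t; split; [lia | ].
have reach1 := dRRA_vine i1_gt0 i1_in idx_ge (flat T1 (fun _ => @or_intror _ _)).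
have reach2 := dRRA_vine i1_gt0 i1_in idx_ge (flat T2 (fun _ => @or_introl _ _)).
by apply: (rt_trans _ _ _ _ _ reach1); rewrite same_nodes; apply: dRRA_defined_sym.
Qed.
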